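(* With the notation of the context, the Laurent polynomials $\varepsilon^\sigma_i[y;q^{-1}]:=e^\sigma_i[y;a^{-1},b^{-1},c^{-1},d^{-1}\mid q^{-1}]$ satisfy, for $1\le i\le D-1$, $$\varepsilon^+_{i-1}[y;q^{-1}]=\frac{ab(1-q^i)(1-cdq^{i-1})}{ab-1}\frac{(abcd;q)_{2i-1}}{a^i(q,bc,bd,cd;q)_i}\big(P_i-Q_i\big),$$ $$\varepsilon^-_i[y;q^{-1}]=\frac{(1-abq^i)(1-abcdq^{i-1})}{1-ab}\frac{(abcd;q)_{2i-1}}{a^i(q,bc,bd,cd;q)_i}\Big(P_i-\frac{ab(1-q^i)(1-cdq^{i-1})}{(1-abq^i)(1-abcdq^{i-1})}Q_i\Big),$$ and moreover $\varepsilon^-_0[y;q^{-1}]=1$ and $\varepsilon^+_{D-1}[y;q^{-1}]=\frac{(abcd;q)_{2D-1}}{a^D(q,bc,bd;q)_D(cd;q)_{D-1}}P_D$, where $P_i=P_i[y;a,b,c,d\mid q]$ and $Q_i=a^{-1}b^{-1}y^{-1}(1-ay)(1-by)P_{i-1}[y;aq,bq,c,d\mid q]$.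
   Context: $q\in\mathbb{C}^*$ is not a root of unity; for $p\in\mathbb{C}^*$, $(\alpha;p)_n=(1-\alpha)(1-\alpha p)\cdots(1-\alpha p^{n-1})$ and $(\alpha_1,\dots,\alpha_r;p)_n=\prod_k(\alpha_k;p)_n$. $\Gamma$ is a $Q$-polynomial distance-regular graph of diameter $D\ge3$ containing a Delsarte clique and of $q$-Racah type: relative to a fixed vertex, its Leonard system (adjacency matrix, dual adjacency matrix, primitive and dual primitive idempotents in the $Q$-polynomial ordering) has eigenvalues $\theta_i=\theta_0+h(1-q^i)(1-sq^{i+1})q^{-i}$, dual eigenvalues $\theta^*_i=\theta^*_0+h^*(1-q^i)(1-s^*q^{i+1})q^{-i}$, first split sequence $\varphi_i=hh^*q^{1-2i}(1-q^i)(1-q^{i-D-1})(1-r_1q^i)(1-r_2q^i)$ and second split sequence $\phi_i=hh^*q^{1-2i}(1-q^i)(1-q^{i-D-1})(r_1-s^*q^i)(r_2-s^*q^i)/s^*$, for nonzero $h,h^*,s,s^*,r_1,r_2$ with $r_1r_2=ss^*q^{D+1}$; none of $q^i,r_1q^i,r_2q^i,s^*q^i/r_1,s^*q^i/r_2$ equals $1$ for $1\le i\le D$, and neither $sq^i$ nor $s^*q^i$ equals $1$ for $2\le i\le 2D$. Square roots $q^{1/2},s^{1/2},s^{*1/2},r_1^{1/2},r_2^{1/2}$ are fixed with $r_1^{1/2}r_2^{1/2}=s^{1/2}s^{*1/2}q^{(D+1)/2}$, $q^{m/2}=(q^{1/2})^m$. Let $a=\frac{r_1^{1/2}r_2^{1/2}}{s^{*1/2}q^{D/2}}$,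 $b=\frac{s^{*1/2}}{r_1^{1/2}r_2^{1/2}q^{D/2}}$, $c=\frac{r_2^{1/2}s^{*1/2}q^{(D+2)/2}}{r_1^{1/2}}$, $d=\frac{r_1^{1/2}s^{*1/2}q^{(D+2)/2}}{r_2^{1/2}}$ (so $ab=q^{-D}$). For nonzero $\alpha,\beta,\gamma,\delta,p$: $P_i[y;\alpha,\beta,\gamma,\delta\mid p]=\frac{(\alpha\beta,\alpha\gamma,\alpha\delta;p)_i}{\alpha^i(\alpha\beta\gamma\delta p^{i-1};p)_i}\sum_{j=0}^i\frac{(p^{-i},\alpha\beta\gamma\delta p^{i-1},\alpha y,\alpha y^{-1};p)_j}{(\alpha\beta,\alpha\gamma,\alpha\delta,p;p)_j}p^j$, and (whenever denominators are nonzero) for $1\le i\le D-1$ $e^+_{i-1}[y;\alpha,\beta,\gamma,\delta\mid p]=\frac{\alpha\beta(1-p^i)(1-\gamma\delta p^{i-1})}{(\alpha\beta-1)(1-\alpha\beta\gamma\delta p^{2i-1})}\frac{(\alpha\beta\gamma\delta;p)_{2i}}{\alpha^i(p,\beta\gamma,\beta\delta,\gamma\delta;p)_i}\Big(P_i[y;\alpha,\beta,\gamma,\delta\mid p]-y(1-\alpha y^{-1})(1-\beta y^{-1})P_{i-1}[y;\alpha p,\beta p,\gamma,\delta\mid p]\Big)$, $e^-_i[y;\alpha,\beta,\gamma,\delta\mid p]=\frac{(1-\alpha\beta p^i)(1-\alpha\beta\gamma\delta p^{i-1})}{(1-\alpha\beta)(1-\alpha\beta\gamma\delta p^{2i-1})}\frac{(\alpha\beta\gamma\delta;p)_{2i}}{\alpha^i(p,\beta\gamma,\beta\delta,\gamma\delta;p)_i}\Big(P_i[y;\alpha,\beta,\gamma,\delta\mid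 p]-\frac{\alpha\beta(1-p^i)(1-\gamma\delta p^{i-1})}{(1-\alpha\beta p^i)(1-\alpha\beta\gamma\delta p^{i-1})}y(1-\alpha y^{-1})(1-\beta y^{-1})P_{i-1}[y;\alpha p,\beta p,\gamma,\delta\mid p]\Big)$, $e^-_0=1$, $e^+_{D-1}[y;\alpha,\beta,\gamma,\delta\mid p]=\frac{(\alpha\beta\gamma\delta;p)_{2D-1}}{\alpha^D(p,\beta\gamma,\beta\delta;p)_D(\gamma\delta;p)_{D-1}}P_D[y;\alpha,\beta,\gamma,\delta\mid p]$. *)

From mathcomp Require Import all_boot all_algebra.
From mathcomp Require Import complex Rstruct.
Set Implicit Arguments. Unset Strict Implicit. Unset Printing Implicit Defensive.
Import GRing.Theory.
Local Open Scope ring_scope.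

Definition C : fieldType := complex Rdefinitions.R.

Definition qpoch (x p : C) (n : nat) : C := \prod_(k < n) (1 - x * p ^+ k).

Definition Pw (i : nat) (y al be ga de p : C) : C :=
  qpoch (al * be) p i * qpoch (al * ga) p i * qpoch (al * de) p i
  / (al ^+ i * qpoch (al * be * ga * de * p ^+ i.-1) p i)
  * \sum_(j < i.+1)
      (qpoch (p ^- i) p j * qpoch (al * be * ga * de * p ^+ i.-1) p j
       * qpoch (al * y) p j * qpoch (al * y^-1) p j
       / (qpoch (al * be) p j * qpoch (al * ga) p j * qpoch (al * de) p j
          * qpoch p p j)
       * p ^+ j).

Definition efac (i : nat) (al be ga de p : C) : C :=
  qpoch (al * be * ga * de) p (2 * i)
  / (al ^+ i * (qpoch p p i * qpoch (be * ga) p i * qpoch (be * de) p i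
                * qpoch (ga * de) p i)).

Definition Rterm (i : nat) (y al be ga de p : C) : C :=
  y * (1 - al * y^-1) * (1 - be * y^-1) * Pw i.-1 y (al * p) (be * p) ga de p.

(* e^+_{i-1} for 1 <= i <= D-1 (generic formula) *)
Definition eplus_gen (i : nat) (y al be ga de p : C) : C :=
  al * be * (1 - p ^+ i) * (1 - ga * de * p ^+ i.-1)
  / ((al * be - 1) * (1 - al * be * ga * de * p ^+ (2 * i).-1))
  * efac i al be ga de p
  * (Pw i y al be ga de p - Rterm i y al be ga de p).

Definition eplus_top (D : nat) (y al be ga de p : C) : C :=
  qpoch (al * be * ga * de) p (2 * D).-1
  / (al ^+ D * (qpoch p p D * qpoch (be * ga) p D * qpoch (be * de) p D
                * qpoch (ga * de) p D.-1))
  * Pw D y al be ga de p.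

Definition eplus (D k : nat) (y al be ga de p : C) : C :=
  if k.+1 == D then eplus_top D y al be ga de p
  else eplus_gen k.+1 y al be ga de p.

Definition eminus_gen (i : nat) (y al be ga de p : C) : C :=
  (1 - al * be * p ^+ i) * (1 - al * be * ga * de * p ^+ i.-1)
  / ((1 - al * be) * (1 - al * be * ga * de * p ^+ (2 * i).-1))
  * efac i al be ga de p
  * (Pw i y al be ga de p
     - al * be * (1 - p ^+ i) * (1 - ga * de * p ^+ i.-1)
       / ((1 - al * be * p ^+ i) * (1 - al * be * ga * de * p ^+ i.-1))
       * Rterm i y al be ga de p).

Definition eminus (k : nat) (y al be ga de p : C) : C :=
  if k == 0%N then 1 else eminus_gen k y al be ga de p.

From mathcomp Require Import all_boot all_algebra.
From mathcomp Require Import complex Rstruct.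
From mathcomp Require Import ring zify.
Import GRing.Theory.
Local Open Scope ring_scope.

(* Inverting a, b, c, d and q multiplies each q-Pochhammer symbol by a monomial
   weight, (x^-1; q^-1)_n = (-1)^n x^-n q^-C(n,2) (x; q)_n.  In every ratio of
   q-Pochhammer symbols occurring in P_i and in the normalising factor of
   e^-+_i, numerator and denominator acquire the same weight, so P_i and that
   factor are invariant; for e^+_{D-1} the weights differ by a b q^D = 1.
   What remains are rational identities between the scalar prefactors. *)

Lemma bin2S n : 'C(n.+1, 2) = ('C(n, 2) + n)%N.
Proof. by rewrite binS bin1. Qed.

Lemma bin2D m n : 'C(m + n, 2) = ('C(m, 2) + 'C(n, 2) + m * n)%N.
Proof.
elim: n => [|n IHn]; first by rewrite addn0 muln0 bin0n !addn0.
by rewrite addnS !bin2S IHn; lia.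
Qed.

Lemma mul_pred_bin2 n : (n.-1 * n = 'C(n, 2) * 2)%N.
Proof.
elim: n => [//|n IHn]; rewrite bin2S mulnDl -IHn.
by case: n {IHn} => [|n] /=; lia.
Qed.

Lemma sqrn_bin2 n : (n * n = 'C(n, 2) * 2 + n)%N.
Proof. by rewrite -mul_pred_bin2; case: n => //= n; lia. Qed.

Lemma pred_double {n} : (0 < n)%N -> (2 * n).-1 = (n + n.-1)%N.
Proof. by lia. Qed.

Lemma index_bounds i D : (1 <= i <= D.-1)%N ->
  [/\ (0 < i)%N, (i < D)%N, ((2 * i).-1.+2 <= 2 * D)%N & (i.-1.+2 <= 2 * D)%N].
Proof. by move=> ?; split; lia. Qed.

Lemma eq_div_scale {k x1 x2 y1 y2 : C} : k != 0 ->
  x1 = k * x2 -> y1 = k * y2 -> x1 / y1 = x2 / y2.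
Proof. by move=> k0 -> ->; rewrite invfM mulrACA divff // mul1r. Qed.

Lemma eq_divM_scale {k x1 x2 y1 y2 z1 z2 : C} : k != 0 ->
  x1 * z1 = k * (x2 * z2) :> C -> y1 = k * y2 -> x1 / y1 * z1 = x2 / y2 * z2.
Proof. by move=> k0 hx hy; rewrite mulrAC [RHS]mulrAC (eq_div_scale k0 hx hy). Qed.

Lemma qpoch0 (x p : C) : qpoch x p 0 = 1.
Proof. by rewrite /qpoch big_ord0. Qed.

Lemma qpochS (x p : C) n : qpoch x p n.+1 = qpoch x p n * (1 - x * p ^+ n).
Proof. by rewrite /qpoch big_ord_recr. Qed.

Definition qweight (x p : C) n : C := (-1) ^+ n / (x ^+ n * p ^+ 'C(n, 2)).

Lemma qweight_neq0 (x p : C) n : x != 0 -> p != 0 -> qweight x p n != 0.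
Proof. by move=> x0 p0; rewrite mulf_neq0 ?signr_eq0 ?invr_eq0 ?mulf_neq0 ?expf_neq0. Qed.

Lemma qpoch_inv (x p : C) n : x != 0 -> p != 0 ->
  qpoch x^-1 p^-1 n = qweight x p n * qpoch x p n.
Proof.
rewrite /qweight => x0 p0; elim: n => [|n IHn].
  by rewrite !qpoch0 bin0n !expr0 !mulr1 divr1.
rewrite !qpochS IHn bin2S !exprD !exprS exprVn.
by field; rewrite ?expf_neq0.
Qed.

Lemma efac_inv i (a b c d q : C) : a != 0 -> b != 0 -> c != 0 -> d != 0 -> q != 0 ->
  efac i a^-1 b^-1 c^-1 d^-1 q^-1 = efac i a b c d q.
Proof.
move=> a0 b0 c0 d0 q0; rewrite /efac -!invfM !qpoch_inv ?mulf_neq0 //.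
apply: (eq_div_scale _ erefl).
  by rewrite qweight_neq0 ?mulf_neq0.
rewrite /qweight mul2n -addnn bin2D sqrn_bin2 !exprD exprM exprVn !exprMn -signr_odd.
(* [field] cannot use ((-1) ^+ i) ^+ 2 = 1, so split on the parity of i. *)
by case: odd; field; rewrite ?expf_neq0.
Qed.

Definition Pw_coef i (a b c d p : C) : C :=
  qpoch (a * b) p i * qpoch (a * c) p i * qpoch (a * d) p i
  / (a ^+ i * qpoch (a * b * c * d * p ^+ i.-1) p i).

Definition Pw_term i j (y a b c d p : C) : C :=
  qpoch (p ^- i) p j * qpoch (a * b * c * d * p ^+ i.-1) p j
  * qpoch (a * y) p j * qpoch (a * y^-1) p j
  / (qpoch (a * b) p j * qpoch (a * c) p j * qpoch (a * d) p j * qpoch p p j)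
  * p ^+ j.

Lemma PwE i (y a b c d p : C) :
  Pw i y a b c d p = Pw_coef i a b c d p * \sum_(j < i.+1) Pw_term i j y a b c d p.
Proof. by []. Qed.

Lemma Pw_coef_inv i (a b c d q : C) :
  a != 0 -> b != 0 -> c != 0 -> d != 0 -> q != 0 ->
  Pw_coef i a^-1 b^-1 c^-1 d^-1 q^-1 = Pw_coef i a b c d q.
Proof.
move=> a0 b0 c0 d0 q0.
rewrite /Pw_coef !exprVn -!invfM !qpoch_inv ?mulf_neq0 ?expf_neq0 //.
apply: (eq_div_scale
  (k := qweight (a * b) q i * qweight (a * c) q i * qweight (a * d) q i)).
- by apply/mulf_neq0; [apply/mulf_neq0|]; apply/qweight_neq0; rewrite ?mulf_neq0.
- by ring.
rewrite /qweight !exprMn -exprM mul_pred_bin2 exprM -signr_odd.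
by case: odd; field; rewrite ?expf_neq0.
Qed.

Lemma Pw_term_inv i j (y a b c d q : C) :
  a != 0 -> b != 0 -> c != 0 -> d != 0 -> q != 0 -> y != 0 ->
  Pw_term i.+1 j y a^-1 b^-1 c^-1 d^-1 q^-1 = Pw_term i.+1 j y a b c d q.
Proof.
move=> a0 b0 c0 d0 q0 y0; rewrite /Pw_term /=.
have -> : q^-1 ^- i.+1 = (q ^- i.+1)^-1 by rewrite exprVn.
have -> : a^-1 * b^-1 * c^-1 * d^-1 * q^-1 ^+ i = (a * b * c * d * q ^+ i)^-1.
  by rewrite exprVn !invfM.
have -> : a^-1 * y = (a * y^-1)^-1 by rewrite invfM invrK.
rewrite -!invfM !qpoch_inv ?invr_eq0 ?mulf_neq0 ?invr_eq0 ?expf_neq0 //.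
apply: (eq_divM_scale (k := qweight (a * b) q j * qweight (a * c) q j
                            * qweight (a * d) q j * qweight q q j)).
- by apply/mulf_neq0; [apply/mulf_neq0; [apply/mulf_neq0|]|];
    apply/qweight_neq0; rewrite ?mulf_neq0.
- rewrite /qweight exprS !exprVn !exprMn !exprVn.
  by field; rewrite ?expf_neq0.
- by ring.
Qed.

Lemma Pw_inv i (y a b c d q : C) :
  a != 0 -> b != 0 -> c != 0 -> d != 0 -> q != 0 -> y != 0 ->
  Pw i y a^-1 b^-1 c^-1 d^-1 q^-1 = Pw i y a b c d q.
Proof.
move=> a0 b0 c0 d0 q0 y0; rewrite !PwE Pw_coef_inv //; congr (_ * _).
case: i => [|i]; first by rewrite !big_ord1 /Pw_term !qpoch0 !expr0.
by apply: eq_bigr => j _; apply: Pw_term_inv.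
Qed.

Definition Qterm i (y a b c d q : C) : C :=
  a^-1 * b^-1 * y^-1 * (1 - a * y) * (1 - b * y) * Pw i.-1 y (a * q) (b * q) c d q.

Lemma Rterm_inv i (y a b c d q : C) :
  a != 0 -> b != 0 -> c != 0 -> d != 0 -> q != 0 -> y != 0 ->
  Rterm i y a^-1 b^-1 c^-1 d^-1 q^-1 = Qterm i y a b c d q.
Proof.
move=> a0 b0 c0 d0 q0 y0; rewrite /Rterm /Qterm -!invfM Pw_inv ?mulf_neq0 //.
by field; rewrite y0 b0 a0.
Qed.

Definition efac_odd i (a b c d q : C) : C :=
  qpoch (a * b * c * d) q (2 * i).-1
  / (a ^+ i * (qpoch q q i * qpoch (b * c) q i * qpoch (b * d) q i
               * qpoch (c * d) q i)).

Lemma efacE i (a b c d q : C) : (0 < i)%N ->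
  efac i a b c d q = (1 - a * b * c * d * q ^+ (2 * i).-1) * efac_odd i a b c d q.
Proof.
move=> i0; rewrite /efac /efac_odd -[in LHS](@prednK (2 * i)) ?muln_gt0 //.
by rewrite qpochS mulrAC mulrC.
Qed.

Lemma eplus_gen_inv i (y a b c d q : C) : (0 < i)%N ->
  a != 0 -> b != 0 -> c != 0 -> d != 0 -> q != 0 -> y != 0 ->
  a * b != 1 -> a * b * c * d * q ^+ (2 * i).-1 != 1 ->
  eplus_gen i y a^-1 b^-1 c^-1 d^-1 q^-1
  = a * b * (1 - q ^+ i) * (1 - c * d * q ^+ i.-1) / (a * b - 1)
    * efac_odd i a b c d q * (Pw i y a b c d q - Qterm i y a b c d q).
Proof.
move=> i0 a0 b0 c0 d0 q0 y0 ab1 abcd1.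
rewrite /eplus_gen Pw_inv // Rterm_inv // efac_inv // efacE //.
rewrite (pred_double i0) !exprD !exprVn.
by field; rewrite ?expf_neq0 // mulN1r !subr_eq0 -exprD -(pred_double i0)
  [1 == _]eq_sym ab1 abcd1 a0 b0 c0 d0.
Qed.

Lemma eminus_gen_inv i (y a b c d q : C) : (0 < i)%N ->
  a != 0 -> b != 0 -> c != 0 -> d != 0 -> q != 0 -> y != 0 ->
  a * b != 1 -> a * b * c * d * q ^+ (2 * i).-1 != 1 ->
  a * b * q ^+ i != 1 -> a * b * c * d * q ^+ i.-1 != 1 ->
  eminus_gen i y a^-1 b^-1 c^-1 d^-1 q^-1
  = (1 - a * b * q ^+ i) * (1 - a * b * c * d * q ^+ i.-1) / (1 - a * b)
    * efac_odd i a b c d q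
    * (Pw i y a b c d q - a * b * (1 - q ^+ i) * (1 - c * d * q ^+ i.-1)
                           / ((1 - a * b * q ^+ i) * (1 - a * b * c * d * q ^+ i.-1))
                           * Qterm i y a b c d q).
Proof.
move=> i0 a0 b0 c0 d0 q0 y0 ab1 abcd1 abq1 abcdq1.
rewrite /eminus_gen Pw_inv // Rterm_inv // efac_inv // efacE //.
rewrite (pred_double i0) !exprD !exprVn.
by field; rewrite ?expf_neq0 // ?mulN1r !subr_eq0 -exprD -(pred_double i0)
  ![1 == _]eq_sym abcdq1 abq1 ab1 abcd1 a0 b0 c0 d0.
Qed.

Definition efac_top D (a b c d q : C) : C :=
  qpoch (a * b * c * d) q (2 * D).-1
  / (a ^+ D * (qpoch q q D * qpoch (b * c) q D * qpoch (b * d) q D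
               * qpoch (c * d) q D.-1)).

Lemma efac_top_inv D (a b c d q : C) : (0 < D)%N ->
  a != 0 -> b != 0 -> c != 0 -> d != 0 -> q != 0 -> a * b * q ^+ D = 1 ->
  efac_top D a^-1 b^-1 c^-1 d^-1 q^-1 = efac_top D a b c d q.
Proof.
case: D => // D _ a0 b0 c0 d0 q0 abq.
rewrite /efac_top -!invfM !qpoch_inv ?mulf_neq0 //.
apply: (eq_div_scale
  (k := qweight (a * b * c * d) q (2 * D.+1).-1 / (a * b * q ^+ D.+1))).
- by rewrite abq divr1 qweight_neq0 ?mulf_neq0.
- by rewrite abq divr1.
have eD : (D.+1 * D = 'C(D.+1, 2) * 2)%N by rewrite -mul_pred_bin2 mulnC.
rewrite /qweight pred_double //= bin2D eD bin2S !exprD exprM !exprD.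
rewrite !exprVn !exprMn !(exprS _ D) -signr_odd.
by case: odd; field; rewrite ?expf_neq0 // a0 b0 c0 d0 q0.
Qed.

Lemma mul_expr_neq1 {x q : C} {m n : nat} : x * q ^+ m = 1 ->
  (forall k, (0 < k)%N -> q ^+ k != 1) -> (n < m)%N -> x * q ^+ n != 1.
Proof.
move=> xq qk nm; apply/eqP => xqn.
have /eqP[] : q ^+ (m - n) != 1 by rewrite qk ?subn_gt0.
by rewrite -xq -[in RHS](subnKC (ltnW nm)) exprD mulrA xqn mul1r.
Qed.

Lemma sqr_neq0 {x y : C} : x ^+ 2 = y -> y != 0 -> x != 0.
Proof. by move=> <-; rewrite expf_eq0. Qed.

Theorem proposition10p7
  (D : nat) (q s ss r1 r2 q12 s12 ss12 r112 r212 : C)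
  (hD : (3 <= D)%N)
  (hq0 : q != 0)
  (hq_nonroot : forall n : nat, (0 < n)%N -> q ^+ n != 1)
  (hs0 : s != 0) (hss0 : ss != 0) (hr10 : r1 != 0) (hr20 : r2 != 0)
  (hr1r2 : r1 * r2 = s * ss * q ^+ D.+1)
  (hnd : forall i : nat, (1 <= i <= D)%N ->
     [/\ q ^+ i != 1, r1 * q ^+ i != 1, r2 * q ^+ i != 1,
         ss * q ^+ i / r1 != 1 & ss * q ^+ i / r2 != 1])
  (hnd2 : forall i : nat, (2 <= i <= 2 * D)%N ->
     s * q ^+ i != 1 /\ ss * q ^+ i != 1)
  (hq12 : q12 ^+ 2 = q) (hs12 : s12 ^+ 2 = s) (hss12 : ss12 ^+ 2 = ss)
  (hr112 : r112 ^+ 2 = r1) (hr212 : r212 ^+ 2 = r2)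
  (hsqrt : r112 * r212 = s12 * ss12 * q12 ^+ D.+1) :
  let a := r112 * r212 / (ss12 * q12 ^+ D) in
  let b := ss12 / (r112 * r212 * q12 ^+ D) in
  let c := r212 * ss12 * q12 ^+ D.+2 / r112 in
  let d := r112 * ss12 * q12 ^+ D.+2 / r212 in
  let Pi := fun (i : nat) (y : C) => Pw i y a b c d q in
  let Qi := fun (i : nat) (y : C) =>
    a^-1 * b^-1 * y^-1 * (1 - a * y) * (1 - b * y) * Pw i.-1 y (a * q) (b * q) c d q in
  let fac := fun (i : nat) =>
    qpoch (a * b * c * d) q (2 * i).-1
    / (a ^+ i * (qpoch q q i * qpoch (b * c) q i * qpoch (b * d) q i
                 * qpoch (c * d) q i)) in
  (forall (i : nat) (y : C), (1 <= i <= D.-1)%N -> y != 0 ->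
     eplus D i.-1 y a^-1 b^-1 c^-1 d^-1 q^-1
       = a * b * (1 - q ^+ i) * (1 - c * d * q ^+ i.-1) / (a * b - 1)
         * fac i * (Pi i y - Qi i y)
     /\
     eminus i y a^-1 b^-1 c^-1 d^-1 q^-1
       = (1 - a * b * q ^+ i) * (1 - a * b * c * d * q ^+ i.-1) / (1 - a * b)
         * fac i
         * (Pi i y - a * b * (1 - q ^+ i) * (1 - c * d * q ^+ i.-1)
                     / ((1 - a * b * q ^+ i) * (1 - a * b * c * d * q ^+ i.-1))
                     * Qi i y))
  /\
  (forall y : C, y != 0 ->
     eminus 0 y a^-1 b^-1 c^-1 d^-1 q^-1 = 1
     /\
     eplus D D.-1 y a^-1 b^-1 c^-1 d^-1 q^-1
       = qpoch (a * b * c * d) q (2 * D).-1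
         / (a ^+ D * (qpoch q q D * qpoch (b * c) q D * qpoch (b * d) q D
                      * qpoch (c * d) q D.-1))
         * Pi D y).
Proof.
move=> a b c d Pi Qi fac.
have D0 : (0 < D)%N by apply: leq_trans hD.
have q12_0 := sqr_neq0 hq12 hq0; have ss12_0 := sqr_neq0 hss12 hss0.
have r112_0 := sqr_neq0 hr112 hr10; have r212_0 := sqr_neq0 hr212 hr20.
have abq : a * b * q ^+ D = 1.
  rewrite /a /b -hq12 -exprM mulnC exprM.
  by field; rewrite expf_neq0 // r212_0 r112_0 ss12_0.
have abcd : a * b * c * d = ss * q ^+ 2.
  rewrite /a /b /c /d -hss12 -hq12 !exprS.
  by field; rewrite expf_neq0 // r212_0 r112_0 ss12_0.
clearbody a b c d.
have [a0 b0 c0 d0] : [/\ a != 0, b != 0, c != 0 & d != 0].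
  have : a * b * c * d != 0 by rewrite abcd mulf_neq0 ?expf_neq0.
  by rewrite !mulf_eq0 !negb_or => /andP[/andP[/andP[-> ->] ->] ->].
have abq1 n : (n < D)%N -> a * b * q ^+ n != 1 := mul_expr_neq1 abq hq_nonroot.
have ab1 : a * b != 1 by have := abq1 0%N D0; rewrite expr0 mulr1.
have abcdq1 n : (n.+2 <= 2 * D)%N -> a * b * c * d * q ^+ n != 1.
  by move=> nD; rewrite abcd -mulrA -exprD; case: (hnd2 n.+2) => //; rewrite nD.
split=> [i y /index_bounds[i0 iD i2D i1D] y0 | y y0].
  rewrite /eplus /eminus prednK // (ltn_eqF iD) (gtn_eqF i0).
  split; first exact: eplus_gen_inv i0 a0 b0 c0 d0 hq0 y0 ab1 (abcdq1 _ i2D).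
  exact: eminus_gen_inv i0 a0 b0 c0 d0 hq0 y0 ab1 (abcdq1 _ i2D) (abq1 _ iD)
    (abcdq1 _ i1D).
split=> //; rewrite /eplus prednK // eqxx /eplus_top Pw_inv //.
by congr (_ * _); apply: efac_top_inv.
Qed.
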